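(* Let $X$ and $Y$ be finite sets with $|Y| = n$, let $I = X \cap Y$, and let $p \in [1/2, 1]$. Define two random variables as follows. (1) (Mechanism $\mathcal M'_Y$.) Sample $s \sim \mathrm{Bin}(n, 2(1-p))$; choose $T$ uniformly at random among all subsets of $Y$ of cardinality $s$; independently for each $y \in I \cap T$ flip a fair coin $c_y \sim \mathrm{Ber}(1/2)$; set $Z' = |I \setminus T| + \sum_{y \in I \cap T} c_y$. (2) (Mechanism $\mathcal M''_Y$.) Sample $s_1 \sim \mathrm{Bin}(|I|, 2(1-p))$; choose $T_1$ uniformly at random among all subsets of $I$ of cardinality $s_1$; independently for each $y \in T_1$ flip a fair coin $c_y \sim \mathrm{Ber}(1/2)$; set $Z'' = |I \setminus T_1| + \sum_{y \in T_1} c_y$. Then $\Pr[Z' = z] = \Pr[Z'' = z]$ for all integers $z \ge 0$.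
   Context: $\mathrm{Ber}(r)$ denotes a Bernoulli random variable with success probability $r$, and $\mathrm{Bin}(m, r)$ a binomial random variable with $m$ trials and success probability $r$. All random choices are independent unless stated otherwise. *)

From mathcomp Require Import all_boot all_order all_algebra.
Set Implicit Arguments. Unset Strict Implicit. Unset Printing Implicit Defensive.
Import Order.TTheory GRing.Theory Num.Theory.
Local Open Scope ring_scope.

Definition binom_pmf {R : realFieldType} (m : nat) (r : R) (s : nat) : R :=
  'C(m, s)%:R * r ^+ s * (1 - r) ^+ (m - s).

Definition ksubsets {T : finType} (A : {set T}) (s : nat) : {set {set T}} :=
  [set S : {set T} | (S \subset A) && (#|S| == s)].

(* Generic mechanism on ground set G with intersection set I and flip
   probability r:  s ~ Bin(|G|, r); S uniform among s-subsets of G;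
   independent fair coins c_y for y in I :&: S (encoded by the set
   C \subset I :&: S of heads, each outcome having probability
   (1/2)^|I :&: S|); output |I \ S| + sum_y c_y = |I \ S| + |C|. *)
Definition mech_pr {R : realFieldType} {T : finType} (G I : {set T}) (r : R)
    (z : nat) : R :=
  \sum_(0 <= s < #|G|.+1)
    binom_pmf #|G| r s *
    \sum_(S in ksubsets G s)
      (#|ksubsets G s|%:R)^-1 *
      \sum_(C : {set T} | C \subset I :&: S)
        (2%:R ^+ #|I :&: S|)^-1 * (#|I :\: S| + #|C| == z)%:R.

Definition M'_pr {R : realFieldType} {T : finType} (X Y : {set T}) (p : R)
    (z : nat) : R := mech_pr Y (X :&: Y) (2%:R * (1 - p)) z.

Definition M''_pr {R : realFieldType} {T : finType} (X Y : {set T}) (p : R)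
    (z : nat) : R := mech_pr (X :&: Y) (X :&: Y) (2%:R * (1 - p)) z.

From mathcomp Require Import all_boot all_order all_algebra.
From mathcomp Require Import ring zify.
Import Order.TTheory GRing.Theory Num.Theory.
Local Open Scope ring_scope.

(* Sampling s ~ Bin(|D|, r) and then a uniform s-subset of D is the same as
   keeping each element of D independently with probability r, so that S has
   weight r^|S| (1 - r)^(|D| - |S|).  Under this product measure the trace
   I :&: S of a random subset of G is itself a product-measure random subset
   of I, and the output of the mechanism depends on S only through I :&: S.
   Hence both mechanisms reduce to the same sum over subsets of I; the
   identity holds for every flip probability. *)

Section Mechanism.
Variables (R : realFieldType) (T : finType) (r : R).
Implicit Types (A B D G I : {set T}).

Definition subset_weight D (S : {set T}) : R :=
  r ^+ #|S| * (1 - r) ^+ (#|D| - #|S|).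

Lemma sum_binom_ksubsets D (g : {set T} -> R) :
  \sum_(0 <= s < #|D|.+1) binom_pmf #|D| r s *
    \sum_(S in ksubsets D s) (#|ksubsets D s|%:R)^-1 * g S
  = \sum_(S : {set T} | S \subset D) subset_weight D S * g S.
Proof.
rewrite (partition_big (fun S : {set T} => inord #|S| : 'I_#|D|.+1) predT) //=.
rewrite big_mkord; apply: eq_bigr => j _; rewrite mulr_sumr.
apply: eq_big => [S | S].
  rewrite /ksubsets inE; case: (boolP (S \subset D)) => //= sSD.
  by rewrite -val_eqE /= inordK // ltnS subset_leq_card.
rewrite /ksubsets inE => /andP[sSD /eqP <-].
have binS_neq0 : ('C(#|D|, #|S|)%:R : R) != 0.
  by rewrite pnatr_eq0 -lt0n bin_gt0 subset_leq_card.
by rewrite cards_draws /binom_pmf /subset_weight; field.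
Qed.

Lemma sum_subset_weight D : \sum_(S : {set T} | S \subset D) subset_weight D S = 1.
Proof.
under eq_bigr do rewrite -[subset_weight _ _]mulr1.
rewrite -sum_binom_ksubsets -[RHS](expr1n _ #|D|) -[1 in RHS](subrK r).
rewrite exprDn big_mkord; apply: eq_bigr => j _.
rewrite (eq_bigr (fun=> (#|ksubsets D j|%:R)^-1)) => [|S _]; last by rewrite mulr1.
have binj_neq0 : ('C(#|D|, j)%:R : R) != 0.
  by rewrite pnatr_eq0 -lt0n bin_gt0 -ltnS.
rewrite sumr_const /ksubsets cards_draws -[_ *+ _]mulr_natr mulVf // mulr1.
by rewrite /binom_pmf -mulr_natr; ring.
Qed.

Lemma big_subsetU (D1 D2 : {set T}) (F : {set T} -> R) :
  [disjoint D1 & D2] ->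
  \sum_(S : {set T} | S \subset D1 :|: D2) F S
  = \sum_(A : {set T} | A \subset D1) \sum_(B : {set T} | B \subset D2) F (A :|: B).
Proof.
move=> D12.
rewrite (partition_big (fun S : {set T} => S :&: D1) (fun A => A \subset D1)) /=;
  last by move=> S _; apply: subsetIr.
apply: eq_bigr => A sAD1.
rewrite (reindex_onto (fun B => A :|: B) (fun S => S :&: D2)) /=; last first.
  move=> S /andP[/setIidPl SD /eqP <-].
  by rewrite -setIUr SD.
apply: eq_bigl => B; apply/idP/idP => [/andP[_ /eqP <-] | sBD2].
  exact: subsetIr.
have AD2 : A :&: D2 = set0 by apply: disjoint_setI0; apply: disjointWl D12.
have BD1 : B :&: D1 = set0.
  by apply: disjoint_setI0; rewrite disjoint_sym; apply: disjointWr D12.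
by rewrite setUSS // !setIUl AD2 BD1 (setIidPl sAD1) (setIidPl sBD2) setU0 set0U !eqxx.
Qed.

Lemma subset_weightU (D1 D2 A B : {set T}) :
  [disjoint D1 & D2] -> A \subset D1 -> B \subset D2 ->
  subset_weight (D1 :|: D2) (A :|: B) = subset_weight D1 A * subset_weight D2 B.
Proof.
move=> D12 sAD1 sBD2.
have AB : [disjoint A & B] by apply: disjointW D12.
rewrite /subset_weight cardsU cardsU (disjoint_setI0 D12) (disjoint_setI0 AB).
have := subset_leq_card sAD1; have := subset_leq_card sBD2.
rewrite cards0 !subn0 => leB leA.
have -> : (#|D1| + #|D2| - (#|A| + #|B|) = (#|D1| - #|A|) + (#|D2| - #|B|))%N.
  by lia.
by rewrite !exprD; ring.
Qed.

Lemma sum_subset_weight_setI G I (h : {set T} -> R) : I \subset G ->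
  \sum_(S : {set T} | S \subset G) subset_weight G S * h (I :&: S)
  = \sum_(A : {set T} | A \subset I) subset_weight I A * h A.
Proof.
move=> sIG.
have I_GI : [disjoint I & G :\: I].
  by rewrite -setI_eq0 setDE setICA setICr setI0.
have splitG : G = I :|: (G :\: I) by rewrite -{1}(setID G I) (setIidPr sIG).
rewrite [in LHS]splitG big_subsetU //; apply: eq_bigr => A sAI.
transitivity (\sum_(B : {set T} | B \subset G :\: I)
                subset_weight I A * h A * subset_weight (G :\: I) B).
  apply: eq_bigr => B sB.
  have IB : I :&: B = set0 by apply: disjoint_setI0; apply: disjointWr I_GI.
  by rewrite subset_weightU // setIUr (setIidPr sAI) IB setU0 mulrAC.
by rewrite -mulr_sumr sum_subset_weight mulr1.
Qed.

Definition coin_pr I A (z : nat) : R :=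
  \sum_(C : {set T} | C \subset A)
    (2%:R ^+ #|A|)^-1 * (#|I :\: A| + #|C| == z)%:R.

Lemma mech_prE G I (z : nat) :
  I \subset G ->
  mech_pr G I r z
  = \sum_(A : {set T} | A \subset I) subset_weight I A * coin_pr I A z.
Proof.
move=> sIG; rewrite /mech_pr sum_binom_ksubsets -(sum_subset_weight_setI _ _ _ sIG).
apply: eq_bigr => S _; congr (_ * _).
by rewrite /coin_pr setDIr setDv set0U.
Qed.

Lemma mech_pr_restrict G I (z : nat) :
  I \subset G -> mech_pr G I r z = mech_pr I I r z.
Proof. by move=> sIG; rewrite !mech_prE. Qed.

End Mechanism.

Theorem lemma3 (R : realFieldType) (T : finType) (X Y : {set T}) (p : R)
    (hp1 : 2%:R^-1 <= p) (hp2 : p <= 1) (z : nat) :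
  M'_pr X Y p z = M''_pr X Y p z.
Proof. by rewrite /M'_pr /M''_pr mech_pr_restrict // subsetIr. Qed.
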